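(* Let $\alpha,\beta,\gamma\in\{1,-1\}$, $u_1,\dots,u_4\in\Bbbk^\times$, and let $D(\mathfrak{D}_4)$ act on $B$ as in the context. Then the group-grade component of the homological determinant $\mathrm{hdet}_B:D(\mathfrak{D}_4)\to\Bbbk$ is trivial (i.e. $\mathrm{hdet}_B(\phi_g)=\delta_{g,e}$), and $$\mathrm{hdet}_B(r)=-\alpha\beta\gamma,\qquad \mathrm{hdet}_B(s)=-\beta\gamma.$$ In particular the homological determinant is trivial (equal to the counit) if and only if $\alpha=1$ and $\beta=-\gamma$.
   Context: Let $\Bbbk=\mathbb{C}$, $i=\sqrt{-1}$, $\mathfrak{D}_4=\langle r,s\mid r^4=e,\ s^2=r^2,\ rsrs^{-1}=e\rangle$. The Drinfeld double $D(G)$ has basis $\{\phi_gh\}$, multiplication $(\phi_g h)(\phi_{g'}h')=\delta_{g,hg'h^{-1}}\phi_g hh'$, comultiplication $\Delta(\phi_gh)=\sum_x\phi_xh\otimes\phi_{x^{-1}g}h$, counit $\epsilon(\phi_gh)=\delta_{g,e}$. A right $D(G)$-module algebra is a $G$-graded algebra with a right $G$-action by algebra automorphisms with $A_x\cdot g\subseteq A_{g^{-1}xg}$, $\phi_x$ projecting onto $A_x$. The homological determinant $\mathrm{hdet}_B$ of a Hopf action on an AS regular algebra is that of Kirkman–Kuzmanovich–Zhang; for a Koszul AS regular algebra $B$ it is the character by which $D(G)$ acts on the one-dimensional span of the twisted superpotential of $B$. The algebra $B$ is $\Bbbk\langle x_1,x_2,y_1,y_2,z_1,z_2\rangle$ modulo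 $x_1x_2-\alpha x_2x_1$, $y_1y_2-\beta y_2y_1$, $z_1z_2-\gamma z_2z_1$, $x_1y_1-u_1y_1x_2$, $x_2y_1-u_1y_1x_1$, $x_1y_2+u_1y_2x_2$, $x_2y_2+u_1y_2x_1$, $x_1z_1-iu_2z_1x_2$, $x_2z_1-iu_2z_1x_1$, $ix_1z_2-u_2z_2x_2$, $ix_2z_2-u_2z_2x_1$, $y_1z_2-u_3z_2y_1$, $y_2z_1-u_3z_1y_2$, $y_1z_1-u_4z_1y_1$, $y_2z_2-u_4z_2y_2$; it is Koszul AS regular of dimension 6. The $D(\mathfrak{D}_4)$-module algebra structure is given on generators by: $x_1$: grade $s$, $x_1\cdot r=x_2$, $x_1\cdot s=-ix_1$; $x_2$: grade $sr^2$, $x_2\cdot r=-x_1$, $x_2\cdot s=ix_2$; $y_1$: grade $sr$, $y_1\cdot r=-y_2$, $y_1\cdot s=y_2$; $y_2$: grade $sr^3$, $y_2\cdot r=-y_1$, $y_2\cdot s=y_1$; $z_1$: grade $sr$, $z_1\cdot r=-iz_2$, $z_1\cdot s=z_2$; $z_2$: grade $sr^3$, $z_2\cdot r=-iz_1$, $z_2\cdot s=-z_1$. *)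

From HB Require Import structures.
From mathcomp Require Import all_boot all_order all_algebra.
Set Implicit Arguments. Unset Strict Implicit. Unset Printing Implicit Defensive.
Import Order.TTheory GRing.Theory Num.Theory.
Local Open Scope ring_scope.

(* ---------- The group D_4 = <r,s | r^4 = e, s^2 = r^2, r s r s^-1 = e> ----------
   An element (a, b) : 'I_4 * bool stands for the normal form r^a s^b.
   Relations used: s r = r^-1 s (from r s r s^-1 = e) and s^2 = r^2. *)
Definition grp := ('I_4 * bool)%type.
Definition gmul (x y : grp) : grp :=
  ((x.1 + (if x.2 then - y.1 else y.1) + (if x.2 && y.2 then 2%:R else 0))%R,
   x.2 (+) y.2).
Definition ge : grp := (0%R, false).
Definition gr : grp := (1%R, false).
Definition gs : grp := (0%R, true).

Definition gen := 'I_6.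
Definition x1 : gen := inord 0.
Definition x2 : gen := inord 1.
Definition y1 : gen := inord 2.
Definition y2 : gen := inord 3.
Definition z1 : gen := inord 4.
Definition z2 : gen := inord 5.

(* G-grade of each generator, in normal form r^a s^b:
   x1 : s, x2 : s r^2 = r^2 s, y1 : s r = r^3 s, y2 : s r^3 = r s,
   z1 : s r = r^3 s, z2 : s r^3 = r s. *)
Definition lgrade (j : gen) : grp :=
  match val j with
  | 0 => (0%R, true)
  | 1 => (2%:R, true)
  | 2 => (3%:R, true)
  | 3 => (1%R, true)
  | 4 => (3%:R, true)
  | _ => (1%R, true)
  end.

(* ---------- degree-6 tensors V^{(x)6}, V = span(x1,...,z2) ----------
   A tensor is given by its coordinates on the basis of pure tensors
   e_{t 0} (x) ... (x) e_{t 5}, indexed by words t. *)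
Definition word := {ffun 'I_6 -> gen}.

Section Tensors.
Variable C : numClosedFieldType.

Definition tensor := word -> C.
Definition tzero : tensor := fun _ => 0.
Definition tscale (c : C) (f : tensor) : tensor := fun t => c * f t.

(* quadratic elements of V (x) V, given as (coefficient, first letter, second letter) *)
Definition quad (s : seq (C * gen * gen)) : gen -> gen -> C :=
  fun a b => \sum_(p <- s) (if (p.1.2 == a) && (p.2 == b) then p.1.1 else 0).

Definition B_rels (al be ga u1 u2 u3 u4 : C) : seq (gen -> gen -> C) :=
  [:: quad [:: (1, x1, x2); (- al, x2, x1)];
      quad [:: (1, y1, y2); (- be, y2, y1)];
      quad [:: (1, z1, z2); (- ga, z2, z1)];
      quad [:: (1, x1, y1); (- u1, y1, x2)];
      quad [:: (1, x2, y1); (- u1, y1, x1)];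
      quad [:: (1, x1, y2); (u1, y2, x2)];
      quad [:: (1, x2, y2); (u1, y2, x1)];
      quad [:: (1, x1, z1); (- ('i * u2), z1, x2)];
      quad [:: (1, x2, z1); (- ('i * u2), z1, x1)];
      quad [:: ('i, x1, z2); (- u2, z2, x2)];
      quad [:: ('i, x2, z2); (- u2, z2, x1)];
      quad [:: (1, y1, z2); (- u3, z2, y1)];
      quad [:: (1, y2, z1); (- u3, z1, y2)];
      quad [:: (1, y1, z1); (- u4, z1, y1)];
      quad [:: (1, y2, z2); (- u4, z2, y2)] ].

(* f lies in V^{(x)i} (x) R (x) V^{(x)(4-i)}, R = span rels, written in
   coordinates: f(t) = sum_k c_k(t outside positions i,i+1) * rel_k(t_i, t_{i+1}). *)
Definition in_VRV (rels : seq (gen -> gen -> C)) (i : nat) (f : tensor) : Prop :=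
  exists c : word -> nat -> C,
    (forall t t' : word,
        (forall p : 'I_6, (val p != i) && (val p != i.+1) -> t p = t' p) ->
        c t = c t') /\
    forall t : word,
      f t = \sum_(k < size rels)
              c t k * nth (fun _ _ => 0) rels k (t (inord i)) (t (inord i.+1)).

(* The space spanned by the (twisted) superpotential of the Koszul AS regular
   algebra T(V)/(R) of global dimension 6:
   W = \bigcap_{i=0}^{4} V^{(x)i} (x) R (x) V^{(x)(4-i)} inside V^{(x)6}. *)
Definition superpot_space (rels : seq (gen -> gen -> C)) (f : tensor) : Prop :=
  forall i, (i <= 4)%N -> in_VRV rels i f.

(* Right action of r and s on V: e_j . g = (img j).1 * e_{(img j).2} *)
Definition lin_of (img : gen -> C * gen) : gen -> gen -> C :=
  fun j k => if (img j).2 == k then (img j).1 else 0.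

Definition img_r (j : gen) : C * gen :=
  match val j with
  | 0 => (1, x2)
  | 1 => (-1, x1)
  | 2 => (-1, y2)
  | 3 => (-1, y1)
  | 4 => (- 'i, z2)
  | _ => (- 'i, z1)
  end.

Definition img_s (j : gen) : C * gen :=
  match val j with
  | 0 => (- 'i, x1)
  | 1 => ('i, x2)
  | 2 => (1, y2)
  | 3 => (1, y1)
  | 4 => (1, z2)
  | _ => (-1, z1)
  end.

(* diagonal action (Delta(h) = h (x) ... (x) h) of a linear map M on V^{(x)6}:
   (f . M)(t) = sum_s f(s) prod_p M (s p) (t p) *)
Definition act (M : gen -> gen -> C) (f : tensor) : tensor :=
  fun t => \sum_(s : word) f s * \prod_(p : 'I_6) M (s p) (t p).

(* action of the group element r^a s^b (right action: first r a times, then s) *)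
Definition act_el (h : grp) (f : tensor) : tensor :=
  iter h.2 (act (lin_of img_s)) (iter (val h.1) (act (lin_of img_r)) f).

Definition wgrade (t : word) : grp :=
  foldl gmul ge [seq lgrade (t p) | p <- enum 'I_6].

(* action of phi_g: projection onto the grade-g component *)
Definition proj (g : grp) (f : tensor) : tensor :=
  fun t => if wgrade t == g then f t else 0.

(* action of phi_g h in D(G) on the right: f . (phi_g h) = (f . phi_g) . h *)
Definition dact (g h : grp) (f : tensor) : tensor := act_el h (proj g f).

End Tensors.

From mathcomp Require Import all_boot all_order all_algebra ring zify.
From Stdlib Require Import FunctionalExtensionality.
Set Implicit Arguments. Unset Strict Implicit. Unset Printing Implicit Defensive.
Import Order.TTheory GRing.Theory Num.Theory.

(* Each of the 30 products of two distinct generators occurs in exactly one of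
   the 15 binomial relations, and no square occurs in any of them.  Hence a
   tensor lies in V^i (x) R (x) V^(4-i) iff it vanishes on words with a square
   at positions i, i+1 and, for each relation p ab + q cd, its coefficients on
   the words ..ab.. and ..cd.. are in the ratio p : q.  Sorting the letters of
   a word with these exchange rules expresses every coefficient of an element
   of the superpotential space W as a monomial multiple of the coefficient of
   x1 x2 y1 y2 z1 z2, or as zero; since the resulting coefficients satisfy all
   the exchange rules, W is the line spanned by one tensor [superpot0].  Its
   coefficients are Laurent monomials in i, al, be, ga, u1, ..., u4, kept
   symbolic, so that the coherence of the rewriting, the homogeneity of
   [superpot0] of grade e, and its eigenvalues -al be ga and -be ga under the
   monomial matrices r and s are all decided by computation over the 6^6
   words. *)

(* The monomial i^e_i al^e_al be^e_be ga^e_ga u1^e_u1 u2^e_u2 u3^e_u3 u4^e_u4;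
   exponents of i matter mod 4 and those of al, be, ga mod 2, which is what
   [mon_inv] and [mon_eqb] rely on. *)
Record mon := Mon { exp_i : nat; exp_al : nat; exp_be : nat; exp_ga : nat;
                    exp_u1 : int; exp_u2 : int; exp_u3 : int; exp_u4 : int }.

Definition mon1 := Mon 0 0 0 0 0 0 0 0.

Definition mon_mul (m n : mon) : mon :=
  Mon (exp_i m + exp_i n) (exp_al m + exp_al n) (exp_be m + exp_be n)
      (exp_ga m + exp_ga n) (exp_u1 m + exp_u1 n)%R (exp_u2 m + exp_u2 n)%R
      (exp_u3 m + exp_u3 n)%R (exp_u4 m + exp_u4 n)%R.

Definition mon_inv (m : mon) : mon :=
  Mon (3 * exp_i m) (exp_al m) (exp_be m) (exp_ga m)
      (- exp_u1 m)%R (- exp_u2 m)%R (- exp_u3 m)%R (- exp_u4 m)%R.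

Definition mon_eqb (m n : mon) : bool :=
  [&& exp_i m %% 4 == exp_i n %% 4, exp_al m %% 2 == exp_al n %% 2,
      exp_be m %% 2 == exp_be n %% 2, exp_ga m %% 2 == exp_ga n %% 2,
      exp_u1 m == exp_u1 n, exp_u2 m == exp_u2 n, exp_u3 m == exp_u3 n &
      exp_u4 m == exp_u4 n].

Definition mon_prod (s : seq mon) : mon := foldr mon_mul mon1 s.

Definition mon_i (k : nat) := Mon k 0 0 0 0 0 0 0.
Definition mon_opp (m : mon) := mon_mul (mon_i 2) m.
Definition mon_al := Mon 0 1 0 0 0 0 0 0.
Definition mon_be := Mon 0 0 1 0 0 0 0 0.
Definition mon_ga := Mon 0 0 0 1 0 0 0 0.
Definition mon_u1 := Mon 0 0 0 0 1 0 0 0.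
Definition mon_u2 := Mon 0 0 0 0 0 1 0 0.
Definition mon_u3 := Mon 0 0 0 0 0 0 1 0.
Definition mon_u4 := Mon 0 0 0 0 0 0 0 1.

(* The relation bin_p * e_(bin_a) e_(bin_b) + bin_q * e_(bin_c) e_(bin_d). *)
Record binom := Binom { bin_a : nat; bin_b : nat; bin_p : mon;
                        bin_c : nat; bin_d : nat; bin_q : mon }.

Definition binom_flip (r : binom) : binom :=
  Binom (bin_c r) (bin_d r) (bin_q r) (bin_a r) (bin_b r) (bin_p r).

Definition binom_eqb (r r' : binom) : bool :=
  [&& (bin_a r, bin_b r, bin_c r, bin_d r) == (bin_a r', bin_b r', bin_c r', bin_d r'),
      mon_eqb (bin_p r) (bin_p r') & mon_eqb (bin_q r) (bin_q r')].

(* Letters 0, ..., 5 stand for x1, x2, y1, y2, z1, z2; entry k is relation k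
   of B_rels. *)
Definition B_binoms : seq binom :=
  [:: Binom 0 1 mon1 1 0 (mon_opp mon_al);
      Binom 2 3 mon1 3 2 (mon_opp mon_be);
      Binom 4 5 mon1 5 4 (mon_opp mon_ga);
      Binom 0 2 mon1 2 1 (mon_opp mon_u1);
      Binom 1 2 mon1 2 0 (mon_opp mon_u1);
      Binom 0 3 mon1 3 1 mon_u1;
      Binom 1 3 mon1 3 0 mon_u1;
      Binom 0 4 mon1 4 1 (mon_opp (mon_mul (mon_i 1) mon_u2));
      Binom 1 4 mon1 4 0 (mon_opp (mon_mul (mon_i 1) mon_u2));
      Binom 0 5 (mon_i 1) 5 1 (mon_opp mon_u2);
      Binom 1 5 (mon_i 1) 5 0 (mon_opp mon_u2);
      Binom 2 5 mon1 5 2 (mon_opp mon_u3);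
      Binom 3 4 mon1 4 3 (mon_opp mon_u3);
      Binom 2 4 mon1 4 2 (mon_opp mon_u4);
      Binom 3 5 mon1 5 3 (mon_opp mon_u4)]%N.

Definition B_binom (k : nat) : binom := nth (Binom 0 0 mon1 0 0 mon1) B_binoms k.

Fixpoint find_binom (k : nat) (rs : seq binom) (a b : nat) : option (nat * binom) :=
  if rs is r :: rs' then
    if (bin_a r == a) && (bin_b r == b) then Some (k, r)
    else if (bin_c r == a) && (bin_d r == b) then Some (k, binom_flip r)
    else find_binom k.+1 rs' a b
  else None.

(* The relation containing e_a e_b (no relation contains a square), with its
   index in [B_binoms], oriented so that e_a e_b comes first. *)
Definition binom_at (a b : nat) : option (nat * binom) := find_binom 0 B_binoms a b.

(* Unlike [inord], [letter] computes under [vm_compute]. *)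
Definition letter (a : nat) : gen := Ordinal (ltn_pmod a (isT : (0 < 6)%N)).

Definition seq_word (l : seq nat) : word := [ffun p : 'I_6 => letter (nth 0%N l p)].

Definition word_seq (t : word) : seq nat := [seq val (t p) | p <- enum 'I_6].

Definition word_seqs : seq (seq nat) :=
  iter 6 (fun ws => [seq a :: w | a <- iota 0 6, w <- ws]) [:: [::]].

Definition base_seq : seq nat := [:: 0; 1; 2; 3; 4; 5]%N.

Definition set_pair (l : seq nat) (j c d : nat) : seq nat :=
  set_nth 0%N (set_nth 0%N l j c) j.+1 d.

Definition seq_grade (l : seq nat) : grp :=
  foldl gmul ge [seq lgrade (letter a) | a <- l].

Inductive nform := NfZero | NfVal of mon | NfStuck.

Definition first_descent (l : seq nat) : nat :=
  find (fun j => nth 0 l j.+1 <= nth 0 l j)%N (iota 0 5).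
Arguments first_descent : simpl never.

(* Applies exchange rules at the first descent until the word is
   x1 x2 y1 y2 z1 z2: [NfVal m] means that the coefficient of the word is m
   times that of x1 x2 y1 y2 z1 z2, and [NfZero] that it must vanish. *)
Fixpoint normalize_fuel (n : nat) (l : seq nat) : nform :=
  let j := first_descent l in
  if (j < 5)%N then
    if n is n'.+1 then
      if binom_at (nth 0%N l j) (nth 0%N l j.+1) is Some (_, r) then
        match normalize_fuel n' (set_pair l j (bin_c r) (bin_d r)) with
        | NfVal m => NfVal (mon_mul (mon_mul (bin_p r) (mon_inv (bin_q r))) m)
        | res => res
        end
      else NfZero
    else NfStuck
  else if l == base_seq then NfVal mon1 else NfStuck.

(* No word needs more than 40 steps, see [normalize_total_all]. *)
Definition normalize (l : seq nat) : nform := normalize_fuel 40 l.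

(* x_j . r = scal_r j * x_(pi j) with pre_r = pi^-1, and likewise for s. *)
Definition pre_r (a : nat) : nat :=
  match a with 0 => 1 | 1 => 0 | 2 => 3 | 3 => 2 | 4 => 5 | _ => 4 end%N.
Definition scal_r (j : nat) : mon :=
  match j with 0 => mon1 | 1 | 2 | 3 => mon_i 2 | _ => mon_i 3 end%N.
Definition pre_s (a : nat) : nat :=
  match a with 0 => 0 | 1 => 1 | 2 => 3 | 3 => 2 | 4 => 5 | _ => 4 end%N.
Definition scal_s (j : nat) : mon :=
  match j with 0 => mon_i 3 | 1 => mon_i 1 | 2 | 3 | 4 => mon1 | _ => mon_i 2 end%N.

Definition eigval_r := mon_opp (mon_mul mon_al (mon_mul mon_be mon_ga)).
Definition eigval_s := mon_opp (mon_mul mon_be mon_ga).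

Definition binom_at_spec (a b : nat) : bool :=
  if binom_at a b is Some (k, r) then
    [&& bin_a r == a, bin_b r == b, (bin_c r < 6)%N, (bin_d r < 6)%N,
        binom_eqb (B_binom k) r || binom_eqb (B_binom k) (binom_flip r) &
        if binom_at (bin_c r) (bin_d r) is Some (k', r') then
          (k' == k) && binom_eqb r' (binom_flip r)
        else false]
  else true.

Definition normalize_total (l : seq nat) : bool :=
  if normalize l is NfStuck then false else true.

Definition normalize_coherent (l : seq nat) : bool :=
  all (fun j =>
    if binom_at (nth 0%N l j) (nth 0%N l j.+1) is Some (_, r) then
      match normalize l, normalize (set_pair l j (bin_c r) (bin_d r)) with
      | NfZero, NfZero => true
      | NfVal m, NfVal m' => mon_eqb (mon_mul (bin_q r) m) (mon_mul (bin_p r) m')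
      | _, _ => false
      end
    else if normalize l is NfZero then true else false) (iota 0 5).

Definition normalize_homogeneous (l : seq nat) : bool :=
  if normalize l is NfVal _ then seq_grade l == ge else true.

Definition normalize_eigen (pre : nat -> nat) (scal : nat -> mon) (c : mon)
    (l : seq nat) : bool :=
  match normalize (map pre l), normalize l with
  | NfZero, NfZero => true
  | NfVal ks, NfVal k =>
      mon_eqb (mon_mul ks (mon_prod [seq scal (pre a) | a <- l])) (mon_mul c k)
  | _, _ => false
  end.

Lemma binom_at_spec_all :
  all (fun a => all (binom_at_spec a) (iota 0 6)) (iota 0 6).
Proof. by vm_compute. Qed.

Lemma normalize_total_all : all normalize_total word_seqs.
Proof. by vm_compute. Qed.

Lemma normalize_coherent_all : all normalize_coherent word_seqs.
Proof. by vm_compute. Qed.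

Lemma normalize_homogeneous_all : all normalize_homogeneous word_seqs.
Proof. by vm_compute. Qed.

Lemma normalize_eigen_r_all : all (normalize_eigen pre_r scal_r eigval_r) word_seqs.
Proof. by vm_compute. Qed.

Lemma normalize_eigen_s_all : all (normalize_eigen pre_s scal_s eigval_s) word_seqs.
Proof. by vm_compute. Qed.

Lemma normalize_base : normalize base_seq = NfVal mon1.
Proof. by vm_compute. Qed.

Lemma mem_iter_allpairs (T : eqType) (s : seq T) n l :
  (l \in iter n (fun ws => [seq a :: w | a <- s, w <- ws]) [:: [::]]) =
  (size l == n) && all (fun a => a \in s) l.
Proof.
elim: n l => [|n IHn] [|a l] //=.
- by apply/allpairsP => -[[b w] /= []].
- apply/allpairsP/andP => [[[b w] /= [hb hw [-> ->]]]|[hl /andP[ha hl']]].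
    by move: hw; rewrite IHn eqSS hb => /andP[-> ->].
  by exists (a, l); split=> //=; rewrite IHn -eqSS hl.
Qed.

Lemma mem_word_seqs l : (l \in word_seqs) = (size l == 6) && all (fun a => a < 6)%N l.
Proof.
by rewrite mem_iter_allpairs; congr (_ && _); apply: eq_all => a; rewrite mem_iota.
Qed.

Lemma all_word_seqsP (P : pred (seq nat)) l : all P word_seqs -> l \in word_seqs -> P l.
Proof. by move/allP; apply. Qed.

Lemma nth_word_seqs l j : l \in word_seqs -> (j < 6)%N -> (nth 0%N l j < 6)%N.
Proof.
by rewrite mem_word_seqs => /andP[/eqP hs /(all_nthP 0%N) hl] hj; apply: hl; rewrite hs.
Qed.

Lemma nth_pair_word_seqs l j : l \in word_seqs -> (j < 5)%N ->
  (nth 0%N l j < 6)%N /\ (nth 0%N l j.+1 < 6)%N.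
Proof. by move=> hl hj; split; apply: nth_word_seqs => //; apply: ltnW. Qed.

Lemma letter_val a : (a < 6)%N -> val (letter a) = a.
Proof. exact: modn_small. Qed.

Lemma letter_valK (x : gen) : letter (val x) = x.
Proof. by apply: val_inj; apply: letter_val (ltn_ord x). Qed.

Lemma inord_letter i : (i < 6)%N -> inord i = letter i.
Proof. by move=> hi; apply: val_inj; rewrite /= inordK // modn_small. Qed.

Lemma nth_word_seq t j : (j < 6)%N -> nth 0%N (word_seq t) j = val (t (letter j)).
Proof.
move=> hj; rewrite /word_seq (nth_map (ord0 : 'I_6)) ?size_enum_ord //.
by rewrite -{1}(letter_val hj) nth_ord_enum.
Qed.

Lemma size_word_seq t : size (word_seq t) = 6.
Proof. by rewrite size_map size_enum_ord. Qed.

Lemma word_seq_in t : word_seq t \in word_seqs.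
Proof.
by rewrite mem_word_seqs size_word_seq; apply/allP => _ /mapP[p _ ->]; apply: ltn_ord.
Qed.

Lemma seq_word_letter l j : (j < 6)%N -> seq_word l (letter j) = letter (nth 0%N l j).
Proof. by move=> hj; rewrite ffunE letter_val. Qed.

Lemma word_seqK t : seq_word (word_seq t) = t.
Proof. by apply/ffunP => p; rewrite ffunE nth_word_seq // !letter_valK. Qed.

Lemma seq_wordK l : l \in word_seqs -> word_seq (seq_word l) = l.
Proof.
move=> hl; have := hl; rewrite mem_word_seqs => /andP[/eqP hs _].
apply: (@eq_from_nth _ 0%N); first by rewrite size_word_seq hs.
move=> j; rewrite size_word_seq => hj.
by rewrite nth_word_seq // seq_word_letter // letter_val // nth_word_seqs.
Qed.

Lemma nth_set_pair l j c d i : nth 0%N (set_pair l j c d) i =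
  if i == j.+1 then d else if i == j then c else nth 0%N l i.
Proof. by rewrite /set_pair nth_set_nth /= nth_set_nth. Qed.

Lemma set_pair_in l j c d : l \in word_seqs -> (j < 5)%N -> (c < 6)%N -> (d < 6)%N ->
  set_pair l j c d \in word_seqs.
Proof.
move=> hl hj hc hd; have := hl; rewrite !mem_word_seqs => /andP[/eqP hs _].
have hsz : size (set_pair l j c d) = 6 by rewrite !size_set_nth hs; lia.
rewrite hsz eqxx /=; apply/(all_nthP 0%N) => i; rewrite hsz => hi.
by rewrite nth_set_pair; case: ifP => // _; case: ifP => // _; apply: nth_word_seqs; lia.
Qed.

Lemma set_pair_id l j : l \in word_seqs -> (j < 5)%N ->
  set_pair l j (nth 0%N l j) (nth 0%N l j.+1) = l.
Proof.
rewrite mem_word_seqs => /andP[/eqP hs _] hj; apply: (@eq_from_nth _ 0%N).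
  by rewrite !size_set_nth hs; lia.
by move=> m _; rewrite nth_set_pair; case: eqP => [->|_] //; case: eqP => [->|].
Qed.

Lemma wgradeE t : wgrade t = seq_grade (word_seq t).
Proof.
rewrite /seq_grade /word_seq -map_comp; congr foldl.
by apply: eq_map => p /=; rewrite letter_valK.
Qed.

Lemma all_pairsP (P : nat -> nat -> bool) a b :
  all (fun a => all (P a) (iota 0 6)) (iota 0 6) -> (a < 6)%N -> (b < 6)%N -> P a b.
Proof.
move=> /allP hP ha hb.
have /allP hPa : all (P a) (iota 0 6) by apply: hP; rewrite mem_iota.
by apply: hPa; rewrite mem_iota.
Qed.

Lemma binom_atP a b k r : (a < 6)%N -> (b < 6)%N -> binom_at a b = Some (k, r) ->
  [/\ bin_a r = a, bin_b r = b, (bin_c r < 6)%N, (bin_d r < 6)%N &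
      exists2 r', binom_at (bin_c r) (bin_d r) = Some (k, r') &
                  binom_eqb r' (binom_flip r)].
Proof.
move=> ha hb hab; have := all_pairsP binom_at_spec_all ha hb.
rewrite /binom_at_spec hab => /and5P[/eqP -> /eqP -> -> -> /andP[_]].
by case: (binom_at _ _) => [[k' r'] /andP[/eqP -> hr']|//]; split=> //; exists r'.
Qed.

Lemma binom_at_representative a b k r : (a < 6)%N -> (b < 6)%N ->
  binom_at a b = Some (k, r) ->
  binom_eqb (B_binom k) r || binom_eqb (B_binom k) (binom_flip r).
Proof.
move=> ha hb hab; have := all_pairsP binom_at_spec_all ha hb.
by rewrite /binom_at_spec hab => /and5P[_ _ _ _ /andP[->]].
Qed.

Lemma pre_r_lt a : (pre_r a < 6)%N. Proof. by case: a => [|[|[|[|[|[|a]]]]]]. Qed.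
Lemma pre_s_lt a : (pre_s a < 6)%N. Proof. by case: a => [|[|[|[|[|[|a]]]]]]. Qed.

Local Open Scope ring_scope.

Lemma expCi4 (C : numClosedFieldType) : 'i ^+ 4 = 1 :> C.
Proof. by rewrite (exprM _ 2 2) sqrCi sqrrN expr1n. Qed.

Lemma expCi3 (C : numClosedFieldType) : 'i ^+ 3 = - 'i :> C.
Proof. by rewrite exprS sqrCi mulrN1. Qed.

Lemma sqr_sign (R : pzRingType) (x : R) : x = 1 \/ x = -1 -> x ^+ 2 = 1.
Proof. by case=> ->; rewrite ?sqrrN expr1n. Qed.

Section Tensors.
Variable C : numClosedFieldType.
Implicit Types (f : tensor C) (c : C).

Lemma tscale1 f : tscale 1 f = f.
Proof. by apply: functional_extensionality => t; rewrite /tscale mul1r. Qed.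

Lemma tscale_zero c : tscale c (tzero C) = tzero C.
Proof. by apply: functional_extensionality => t; rewrite /tscale mulr0. Qed.

Lemma tscaleC c d f : tscale c (tscale d f) = tscale d (tscale c f).
Proof. by apply: functional_extensionality => t; rewrite /tscale mulrCA. Qed.

Lemma proj_tscale g c f : proj g (tscale c f) = tscale c (proj g f).
Proof.
apply: functional_extensionality => t.
by rewrite /proj /tscale; case: ifP; rewrite ?mulr0.
Qed.

Lemma act_tscale M c f : act M (tscale c f) = tscale c (act M f).
Proof.
apply: functional_extensionality => t; rewrite /act /tscale mulr_sumr.
by apply: eq_bigr => s _; rewrite mulrA.
Qed.

Lemma act_el_tscale h c f : act_el h (tscale c f) = tscale c (act_el h f).
Proof.
have iter_tscale n M g : iter n (act M) (tscale c g) = tscale c (iter n (act M) g).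
  by elim: n => //= n ->; rewrite act_tscale.
by rewrite /act_el !iter_tscale.
Qed.

Lemma act_el_zero h : act_el h (tzero C) = tzero C.
Proof.
have act_zero M : act M (tzero C) = tzero C.
  by apply: functional_extensionality => t; apply: big1 => s _; rewrite mul0r.
by rewrite /act_el !iter_fix.
Qed.

(* Kept as lemmas so that unification never unfolds the tensor acted upon. *)
Lemma act_el_gr f : act_el gr f = act (lin_of (img_r C)) f.
Proof. by []. Qed.

Lemma act_el_gs f : act_el gs f = act (lin_of (img_s C)) f.
Proof. by []. Qed.

Lemma act_el_fixed h f : act_el gr f = f -> act_el gs f = f -> act_el h f = f.
Proof. by move=> fr fs; rewrite /act_el !iter_fix. Qed.

Lemma act_monomial (img : gen -> C * gen) (pre : gen -> gen) f t :
  (forall j a, ((img j).2 == a) = (j == pre a)) ->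
  act (lin_of img) f t = f [ffun p => pre (t p)] * \prod_p (img (pre (t p))).1.
Proof.
move=> img_pre; rewrite /act (bigD1 [ffun p => pre (t p)]) //=.
rewrite [X in _ + X = _]big1 ?addr0.
  by congr (_ * _); apply: eq_bigr => p _; rewrite /lin_of ffunE img_pre eqxx.
move=> s s_neq; have [p sp] : exists p, s p != pre (t p).
  apply/existsP; apply: contraNT s_neq => /existsPn sE.
  by apply/eqP/ffunP => p; rewrite ffunE; apply/eqP/negPn.
by rewrite (bigD1 p) //= /lin_of img_pre (negbTE sp) mul0r mulr0.
Qed.

Lemma img_r_pre (j a : gen) : ((img_r C j).2 == a) = (j == letter (pre_r a)).
Proof.
rewrite /img_r /x1 /x2 /y1 /y2 /z1 /z2 !inord_letter //.
by case: j a => [[|[|[|[|[|[|j]]]]]] hj] [[|[|[|[|[|[|a]]]]]] ha].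
Qed.

Lemma img_s_pre (j a : gen) : ((img_s C j).2 == a) = (j == letter (pre_s a)).
Proof.
rewrite /img_s /x1 /x2 /y1 /y2 /z1 /z2 !inord_letter //.
by case: j a => [[|[|[|[|[|[|j]]]]]] hj] [[|[|[|[|[|[|a]]]]]] ha].
Qed.

End Tensors.

Section Superpotential.
Variables (C : numClosedFieldType) (al be ga u1 u2 u3 u4 : C).
Hypotheses (al2 : al ^+ 2 = 1) (be2 : be ^+ 2 = 1) (ga2 : ga ^+ 2 = 1).
Hypotheses (u1_neq0 : u1 != 0) (u2_neq0 : u2 != 0).
Hypotheses (u3_neq0 : u3 != 0) (u4_neq0 : u4 != 0).

Definition mon_val (m : mon) : C :=
  'i ^+ (exp_i m %% 4) * al ^+ (exp_al m %% 2) * be ^+ (exp_be m %% 2) *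
  ga ^+ (exp_ga m %% 2) * u1 ^ exp_u1 m * u2 ^ exp_u2 m * u3 ^ exp_u3 m * u4 ^ exp_u4 m.

Lemma mon_valE m : mon_val m = 'i ^+ exp_i m * al ^+ exp_al m * be ^+ exp_be m *
  ga ^+ exp_ga m * u1 ^ exp_u1 m * u2 ^ exp_u2 m * u3 ^ exp_u3 m * u4 ^ exp_u4 m.
Proof. by rewrite /mon_val !expr_mod ?expCi4. Qed.

Lemma mon_val_eqb m n : mon_eqb m n -> mon_val m = mon_val n.
Proof.
rewrite /mon_val => /and4P[/eqP-> /eqP-> /eqP-> ].
by case/and5P=> /eqP-> /eqP-> /eqP-> /eqP-> /eqP->.
Qed.

Lemma mon_valM m n : mon_val (mon_mul m n) = mon_val m * mon_val n.
Proof. rewrite !mon_valE /= !exprD !expfzDr //; ring. Qed.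

Lemma mon_val1 : mon_val mon1 = 1.
Proof. by rewrite /mon_val /= !expr0z !mulr1. Qed.

Lemma mon_val_prod s : mon_val (mon_prod s) = \prod_(m <- s) mon_val m.
Proof. by elim: s => [|m s IHs]; rewrite ?big_nil ?mon_val1 // big_cons mon_valM IHs. Qed.

Lemma mon_val_neq0 m : mon_val m != 0.
Proof.
have sign_neq0 (x : C) : x ^+ 2 = 1 -> x != 0.
  move=> x2; apply/eqP => x0; move: x2.
  by rewrite x0 expr0n /= => /esym/eqP; rewrite oner_eq0.
rewrite /mon_val; repeat apply: mulf_neq0; rewrite ?expfz_neq0 // expf_neq0 //.
  exact: neq0Ci.
all: exact: sign_neq0.
Qed.

Lemma mon_valVK m : mon_val (mon_inv m) * mon_val m = 1.
Proof.
rewrite -mon_valM mon_valE /= -mulSnr !addnn -!mul2n !exprM expCi4 al2 be2 ga2 !expr1n.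
by rewrite !addNr !expr0z !mulr1.
Qed.

Lemma sum_B_rels_at (f : nat -> C) a b : (a < 6)%N -> (b < 6)%N ->
  \sum_(k < size (B_rels al be ga u1 u2 u3 u4))
     f k * nth (fun _ _ => 0) (B_rels al be ga u1 u2 u3 u4) k (letter a) (letter b) =
  if binom_at a b is Some (k, r) then f k * mon_val (bin_p r) else 0.
Proof.
move=> ha hb; rewrite /= !big_ord_recl big_ord0 /=.
rewrite /quad !big_cons !big_nil /= /x1 /x2 /y1 /y2 /z1 /z2 !inord_letter //.
case: a ha => [|[|[|[|[|[|a]]]]]] ha //; case: b hb => [|[|[|[|[|[|b]]]]]] hb //.
all: rewrite /bump /= ?mon_valE /= ?expr0z ?expr1z ?sqrCi ?expCi3 ?expr1 ?expr0; ring.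
Qed.

Local Notation W := (superpot_space (B_rels al be ga u1 u2 u3 u4)).

Definition exchange_rules (f : tensor C) : Prop :=
  forall l j, l \in word_seqs -> (j < 5)%N ->
  if binom_at (nth 0%N l j) (nth 0%N l j.+1) is Some (_, r) then
    mon_val (bin_q r) * f (seq_word l) =
    mon_val (bin_p r) * f (seq_word (set_pair l j (bin_c r) (bin_d r)))
  else f (seq_word l) = 0.

Lemma superpot_exchange f : W f -> exchange_rules f.
Proof.
move=> Wf l j hl hj; have [cf [cf_out f_sum]] := Wf j (ltnSE hj).
have hj0 : (j < 6)%N by apply: ltnW.
have hj1 : (j.+1 < 6)%N by [].
have f_at l' : l' \in word_seqs -> f (seq_word l') =
    if binom_at (nth 0%N l' j) (nth 0%N l' j.+1) is Some (k, r)
    then cf (seq_word l') k * mon_val (bin_p r) else 0.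
  move=> hl'; rewrite f_sum !inord_letter // !seq_word_letter //.
  by apply: sum_B_rels_at; apply: nth_word_seqs.
have [ha hb] := nth_pair_word_seqs hl hj.
rewrite (f_at l hl); case hab: binom_at => [[k r]|//].
have [_ _ hc hd [r' hr' /and3P[_ /mon_val_eqb q_r' _]]] := binom_atP ha hb hab.
have hl' := set_pair_in hl hj hc hd.
rewrite (f_at _ hl') !nth_set_pair eqxx (ltn_eqF (ltnSn j)) eqxx hr' q_r' /=.
have -> : cf (seq_word (set_pair l j (bin_c r) (bin_d r))) = cf (seq_word l).
  apply: cf_out => p /andP[pj pj1].
  by rewrite !ffunE nth_set_pair (negbTE pj) (negbTE pj1).
ring.
Qed.

Lemma exchange_superpot f : exchange_rules f -> W f.
Proof.
move=> f_exch i hi.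
(* Read the coefficient of relation k off its first monomial placed at i, i+1;
   this does not depend on the letters of t at those positions. *)
pose cf (t : word) k := f (seq_word (set_pair (word_seq t) i
    (bin_a (B_binom k)) (bin_b (B_binom k)))) / mon_val (bin_p (B_binom k)).
exists cf; split.
  move=> t t' tt'; apply: functional_extensionality => k; rewrite /cf.
  congr (f (seq_word _) / _); apply: (@eq_from_nth _ 0%N).
    by rewrite !size_set_nth !size_word_seq.
  move=> m _; rewrite !nth_set_pair; case: ifP => // m_i1; case: ifP => // m_i.
  have [hm|hm] := ltnP m 6; last by rewrite !nth_default ?size_word_seq.
  by rewrite !nth_word_seq // tt' // letter_val // m_i m_i1.
move=> t; set l := word_seq t; have hl : l \in word_seqs := word_seq_in t.
have hi5 : (i < 5)%N by [].
have hi0 : (i < 6)%N by apply: ltnW.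
have [ha hb] := nth_pair_word_seqs hl hi5.
have t_at k : k = i \/ k = i.+1 -> t (inord k) = letter (nth 0%N l k).
  by case=> ->; rewrite nth_word_seq ?inord_letter ?letter_valK.
have -> : f t = f (seq_word l) by rewrite word_seqK.
rewrite !t_at; [|by right|by left]; rewrite sum_B_rels_at //.
rewrite /cf -/l; have := f_exch l i hl hi5; case hab: binom_at => [[k r]|//].
have [ea eb hc hd _] := binom_atP ha hb hab.
have rep := binom_at_representative ha hb hab.
case/orP: rep => /and3P[/eqP[-> -> _ _] /mon_val_eqb -> _].
  by rewrite ea eb set_pair_id // divfK ?mon_val_neq0.
move=> exch; apply: (mulfI (mon_val_neq0 (bin_q r))); rewrite exch /=.
by field; rewrite mon_val_neq0.
Qed.

Definition superpot0 (t : word) : C :=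
  if normalize (word_seq t) is NfVal m then mon_val m else 0.

Lemma base_seq_in : base_seq \in word_seqs.
Proof. by rewrite mem_word_seqs. Qed.

Lemma exchange_normalize f n l : exchange_rules f -> l \in word_seqs ->
  match normalize_fuel n l with
  | NfZero => f (seq_word l) = 0
  | NfVal m => f (seq_word l) = mon_val m * f (seq_word base_seq)
  | NfStuck => True
  end.
Proof.
move=> f_exch; elim: n l => [|n IHn] l hl.
  by rewrite /=; case: ifP => // _; case: ifP => // /eqP ->; rewrite mon_val1 mul1r.
rewrite /=; set j := first_descent l; case: ifP => hj; last first.
  by case: ifP => // /eqP ->; rewrite mon_val1 mul1r.
have := f_exch l j hl hj; case hab: binom_at => [[k r]|//] exch.
have [ha hb] := nth_pair_word_seqs hl hj; have [_ _ hc hd _] := binom_atP ha hb hab.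
have := IHn _ (set_pair_in hl hj hc hd); case: normalize_fuel => // [f'0|m f'm].
  by apply: (mulfI (mon_val_neq0 (bin_q r))); rewrite exch f'0 !mulr0.
rewrite !mon_valM -[f (seq_word l)]mul1r -(mon_valVK (bin_q r)) -mulrA exch f'm; ring.
Qed.

Lemma exchange_coord f t : exchange_rules f -> f t = superpot0 t * f (seq_word base_seq).
Proof.
move=> f_exch; rewrite -{1}(word_seqK t) /superpot0.
have := all_word_seqsP normalize_total_all (word_seq_in t).
have := exchange_normalize 40 f_exch (word_seq_in t).
by rewrite /normalize_total /normalize; case: normalize_fuel => // ->; rewrite mul0r.
Qed.

Lemma superpot0_exchange : exchange_rules superpot0.
Proof.
move=> l j hl hj; have := all_word_seqsP normalize_coherent_all hl.
move=> /allP/(_ j); rewrite mem_iota add0n hj => /(_ isT).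
rewrite /superpot0 seq_wordK //; case hab: binom_at => [[k r]|]; last by case: normalize.
have [ha hb] := nth_pair_word_seqs hl hj; have [_ _ hc hd _] := binom_atP ha hb hab.
rewrite seq_wordK ?set_pair_in //.
case: normalize => [|m|]; case: normalize => [|m'|] //; first by rewrite !mulr0.
by move/mon_val_eqb; rewrite !mon_valM.
Qed.

Lemma superpot0_in : W superpot0.
Proof. exact: exchange_superpot superpot0_exchange. Qed.

Lemma superpot0_base : superpot0 (seq_word base_seq) = 1.
Proof. by rewrite /superpot0 seq_wordK ?base_seq_in // normalize_base mon_val1. Qed.

Lemma superpot0_neq0 : superpot0 <> tzero C.
Proof.
move/(congr1 (fun f => f (seq_word base_seq))).
by rewrite superpot0_base => /eqP; rewrite oner_eq0.
Qed.

Lemma superpot_span w : W w -> w = tscale (w (seq_word base_seq)) superpot0.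
Proof.
move/superpot_exchange => w_exch; apply: functional_extensionality => t.
by rewrite /tscale mulrC; apply: exchange_coord.
Qed.

Lemma proj_superpot0 g : proj g superpot0 = if g == ge then superpot0 else tzero C.
Proof.
apply: functional_extensionality => t; rewrite /proj wgradeE.
have grade_ne t' : seq_grade (word_seq t') != ge -> superpot0 t' = 0.
  have := all_word_seqsP normalize_homogeneous_all (word_seq_in t').
  by rewrite /normalize_homogeneous /superpot0; case: normalize => // m ->.
case: (g =P ge) => [->|g_ne] /=; case: eqP => // grade_g.
  by rewrite grade_ne //; apply/eqP.
by rewrite grade_ne // grade_g; apply/eqP.
Qed.

Lemma act_superpot0 (img : gen -> C * gen) (pre : nat -> nat) (scal : nat -> mon) c :
  (forall a, (pre a < 6)%N) ->
  (forall j a : gen, ((img j).2 == a) = (j == letter (pre a))) ->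
  (forall j : gen, (img j).1 = mon_val (scal j)) ->
  all (normalize_eigen pre scal c) word_seqs ->
  act (lin_of img) superpot0 = tscale (mon_val c) superpot0.
Proof.
move=> pre_lt img_pre img_scal eig; apply: functional_extensionality => t.
rewrite (act_monomial _ _ img_pre); set s := [ffun p => _].
have s_seq : word_seq s = map pre (word_seq t).
  by rewrite /word_seq -map_comp; apply: eq_map => p; rewrite /= ffunE letter_val.
have scal_prod : \prod_p (img (letter (pre (t p)))).1 =
                 mon_val (mon_prod [seq scal (pre a) | a <- word_seq t]).
  rewrite mon_val_prod /word_seq -map_comp big_map big_enum /=.
  by apply: eq_bigr => p _; rewrite img_scal letter_val.
have := all_word_seqsP eig (word_seq_in t).
rewrite scal_prod /tscale /normalize_eigen /superpot0 s_seq.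
case: normalize => [|ks|]; case: normalize => [|k|] //; first by rewrite mul0r mulr0.
by move/mon_val_eqb; rewrite !mon_valM.
Qed.

Lemma img_r_scal (j : gen) : (img_r C j).1 = mon_val (scal_r j).
Proof.
case: j => [[|[|[|[|[|[|j]]]]]] hj] //.
all: rewrite mon_valE /= ?expr0z ?expr0 ?sqrCi ?expCi3; ring.
Qed.

Lemma img_s_scal (j : gen) : (img_s C j).1 = mon_val (scal_s j).
Proof.
case: j => [[|[|[|[|[|[|j]]]]]] hj] //.
all: rewrite mon_valE /= ?expr0z ?expr1 ?expr0 ?sqrCi ?expCi3; ring.
Qed.

Lemma act_superpot0_r : act_el gr superpot0 = tscale (- (al * be * ga)) superpot0.
Proof.
have -> : - (al * be * ga) = mon_val eigval_r by rewrite mon_valE /= expr0z sqrCi; ring.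
rewrite act_el_gr.
exact: act_superpot0 pre_r_lt (img_r_pre C) img_r_scal normalize_eigen_r_all.
Qed.

Lemma act_superpot0_s : act_el gs superpot0 = tscale (- (be * ga)) superpot0.
Proof.
have -> : - (be * ga) = mon_val eigval_s by rewrite mon_valE /= expr0z sqrCi; ring.
rewrite act_el_gs.
exact: act_superpot0 pre_s_lt (img_s_pre C) img_s_scal normalize_eigen_s_all.
Qed.

Lemma proj_superpot w g : W w -> proj g w = if g == ge then w else tzero C.
Proof.
move/superpot_span->; rewrite proj_tscale proj_superpot0.
by case: (g == ge); rewrite ?tscale_zero.
Qed.

Lemma act_superpot w : W w ->
  act_el gr w = tscale (- (al * be * ga)) w /\ act_el gs w = tscale (- (be * ga)) w.
Proof.
move/superpot_span->; rewrite !act_el_tscale act_superpot0_r act_superpot0_s.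
by split; rewrite tscaleC.
Qed.

Lemma dact_superpot_counit :
  (forall w, W w -> forall g h, dact g h w = if g == ge then w else tzero C) <->
  - (al * be * ga) = 1 /\ - (be * ga) = 1.
Proof.
split=> [counit | [er es] w Ww g h].
  have fixed h : act_el h superpot0 = superpot0.
    by have := counit _ superpot0_in ge h; rewrite /dact proj_superpot0 eqxx.
  have eig1 c : tscale c superpot0 = superpot0 -> c = 1.
    move/(congr1 (fun f => f (seq_word base_seq))).
    by rewrite /tscale superpot0_base mulr1.
  by split; apply: eig1; rewrite -?act_superpot0_r -?act_superpot0_s fixed.
have [wr ws] := act_superpot Ww.
rewrite /dact proj_superpot //; case: (g == ge); last exact: act_el_zero.
by apply: act_el_fixed; rewrite ?wr ?ws ?er ?es tscale1.
Qed.

End Superpotential.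

Lemma sign_eigen_trivial (R : comPzRingType) (al be ga : R) :
  be ^+ 2 = 1 -> ga ^+ 2 = 1 ->
  (- (al * be * ga) = 1 /\ - (be * ga) = 1) <-> (al = 1 /\ be = - ga).
Proof.
move=> be2 ga2; split=> [[er es]|[-> ->]].
  have al_eq : al = (- (al * be * ga)) * (- (be * ga)).
    by transitivity (al * be ^+ 2 * ga ^+ 2); [rewrite be2 ga2 !mulr1 | ring].
  split; first by rewrite al_eq er es mulr1.
  by rewrite -[be]mulr1 -ga2 expr2 mulrA -[be * ga]opprK es mulN1r.
by rewrite mul1r mulNr opprK -expr2 ga2.
Qed.

Theorem mainTheorem8 (C : numClosedFieldType) (al be ga u1 u2 u3 u4 : C) :
  (al = 1 \/ al = -1) -> (be = 1 \/ be = -1) -> (ga = 1 \/ ga = -1) ->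
  u1 != 0 -> u2 != 0 -> u3 != 0 -> u4 != 0 ->
  let W := superpot_space (B_rels al be ga u1 u2 u3 u4) in
  (* W is nonzero, so hdet_B is the character of D(D_4) on W *)
  (exists w, W w /\ w <> tzero C) /\
  (* hdet_B(phi_g) = delta_{g,e} *)
  (forall w, W w -> forall g : grp, proj g w = if g == ge then w else tzero C) /\
  (* hdet_B(r) = - al be ga,  hdet_B(s) = - be ga *)
  (forall w, W w ->
     act_el gr w = tscale (- (al * be * ga)) w /\
     act_el gs w = tscale (- (be * ga)) w) /\
  (* hdet_B = counit  iff  al = 1 and be = - ga *)
  ((forall w, W w -> forall g h : grp,
       dact g h w = if g == ge then w else tzero C) <->
   (al = 1 /\ be = - ga)).
Proof.
move=> hal hbe hga u1_neq0 u2_neq0 u3_neq0 u4_neq0 W; rewrite {}/W.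
have [al2 be2 ga2] : [/\ al ^+ 2 = 1, be ^+ 2 = 1 & ga ^+ 2 = 1].
  by split; apply: sqr_sign.
split.
  exists (superpot0 al be ga u1 u2 u3 u4).
  by split; [apply: superpot0_in | apply: superpot0_neq0].
split; first by move=> w /(proj_superpot al2 be2 ga2 u1_neq0 u2_neq0 u3_neq0 u4_neq0).
split; first by move=> w /(act_superpot al2 be2 ga2 u1_neq0 u2_neq0 u3_neq0 u4_neq0).
rewrite (dact_superpot_counit al2 be2 ga2 u1_neq0 u2_neq0 u3_neq0 u4_neq0).
exact: sign_eigen_trivial.
Qed.
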